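(* Let $1\to H\to\Gamma\xrightarrow{\pi}K\to1$ be a short exact sequence of groups where $H$ is amenable, $\Gamma$ is finitely generated and $K$ is extraterrestrial. Then $\Gamma$ is extraterrestrial.
   Context: A finitely generated group is extraterrestrial if its Cayley graph with respect to some (equivalently any) finite symmetric generating set is extraterrestrial. A graph $G=(V,E)$ is extraterrestrial if for every $m$ there is $k$ such that for every $r$ there is a triple $(U,F,O)$ of pairwise disjoint finite vertex sets with $U\neq\emptyset$, $|U|\ge m|F|$, a bijection $\mu:U\to O$ with $d_G(u,\mu(u))\le k$, and every path from $U$ to $O$ either contains a vertex of $F$ or has length at least $r$. *)

From Stdlib Require Import Reals List Permutation.
Import ListNotations.
Open Scope R_scope.

Record Grp := {
  carrier :> Type;
  gmul : carrier -> carrier -> carrier;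
  gone : carrier;
  ginv : carrier -> carrier;
  gmulA : forall x y z, gmul x (gmul y z) = gmul (gmul x y) z;
  gmul1l : forall x, gmul gone x = x;
  gmul1r : forall x, gmul x gone = x;
  gmulVl : forall x, gmul (ginv x) x = gone;
  gmulVr : forall x, gmul x (ginv x) = gone
}.

Arguments gmul {g}.
Arguments gone {g}.
Arguments ginv {g}.

Definition is_hom (G1 G2 : Grp) (f : G1 -> G2) : Prop :=
  forall x y, f (gmul x y) = gmul (f x) (f y).

Definition short_exact (H G K : Grp) (i : H -> G) (p : G -> K) : Prop :=
  is_hom H G i /\ is_hom G K p /\
  (forall x y, i x = i y -> x = y) /\
  (forall k : K, exists g : G, p g = k) /\
  (forall g : G, p g = gone <-> exists h : H, i h = g).

Definition amenable (G : Grp) : Prop :=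
  exists m : (G -> Prop) -> R,
    (forall A, 0 <= m A) /\
    m (fun _ => True) = 1 /\
    (forall A B, (forall x, A x -> B x -> False) ->
       m (fun x => A x \/ B x) = m A + m B) /\
    (forall (g : G) A, m (fun x => A (gmul (ginv g) x)) = m A).

(* chain adj x l : the walk x :: l has consecutive vertices adjacent.
   The walk x :: l ends at (last l x) and has length (length l). *)
Fixpoint chain {V : Type} (adj : V -> V -> Prop) (x : V) (l : list V) : Prop :=
  match l with
  | [] => True
  | y :: l' => adj x y /\ chain adj y l'
  end.

Definition dist_le {V : Type} (adj : V -> V -> Prop) (x y : V) (k : nat) : Prop :=
  exists l, chain adj x l /\ last l x = y /\ (length l <= k)%nat.

Definition disjoint {V : Type} (A B : list V) : Prop :=
  forall v, In v A -> In v B -> False.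

Definition extraterrestrial_graph {V : Type} (adj : V -> V -> Prop) : Prop :=
  forall m : nat, exists k : nat, forall r : nat,
    exists (U F O : list V) (mu : V -> V),
      U <> [] /\ NoDup U /\ NoDup F /\ NoDup O /\
      disjoint U F /\ disjoint U O /\ disjoint F O /\
      (length U >= m * length F)%nat /\
      Permutation (map mu U) O /\
      (forall u, In u U -> dist_le adj u (mu u) k) /\
      (forall x l, In x U -> chain adj x l -> In (last l x) O ->
         (exists v, In v (x :: l) /\ In v F) \/ (r <= length l)%nat).

Definition symmetric_set (G : Grp) (S : list G) : Prop :=
  forall s, In s S -> In (ginv s) S.

Definition generates (G : Grp) (S : list G) : Prop :=
  forall g : G, exists w : list G,
    (forall s, In s w -> In s S) /\ g = fold_right gmul gone w.

Definition cayley_adj (G : Grp) (S : list G) (x y : G) : Prop :=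
  exists s, In s S /\ y = gmul x s.

Definition finitely_generated (G : Grp) : Prop :=
  exists S : list G, generates G S.

Definition extraterrestrial_group (G : Grp) : Prop :=
  exists S : list G, symmetric_set G S /\ generates G S /\
    extraterrestrial_graph (cayley_adj G S).

(* Lift a witness (U, F, O, mu) for K fibrewise: over the points of U and O put
   a finite set Phi of H, over the points of F a set Y with Phi A included in Y and
   |Y| < 2 |Phi|, where A collects the fibre coordinates of the points reachable
   by short paths.  A short path from the lift of U to the lift of O projects to a
   path in K, which must meet F, and the point where it does lies over F with
   fibre coordinate in Phi A, hence in the lift of F.
   Such sets Phi, Y exist because H is amenable: otherwise Hall's marriage
   theorem yields an injection H x bool -> H moving every point by one of finitely
   many left translations, and each half of its image would have mean 1. *)

From Stdlib Require Import List Arith Lia Reals Lra Permutation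
  Classical ClassicalEpsilon FunctionalExtensionality PropExtensionality.
Import ListNotations.
Local Open Scope nat_scope.

Lemma NoDup_map_inj_in {A B} (f : A -> B) l a b :
  NoDup (map f l) -> In a l -> In b l -> f a = f b -> a = b.
Proof.
  induction l as [|c l IH]; simpl; intros nd ha hb e; [destruct ha|].
  inversion nd as [|? ? nfc nd']; subst.
  destruct ha as [<-|ha]; destruct hb as [<-|hb]; auto.
  - exfalso. apply nfc. rewrite e. apply in_map; auto.
  - exfalso. apply nfc. rewrite <- e. apply in_map; auto.
Qed.

Lemma NoDup_list_prod {A B} (l1 : list A) (l2 : list B) :
  NoDup l1 -> NoDup l2 -> NoDup (list_prod l1 l2).
Proof.
  intros n1 n2. induction n1 as [|a l1 na n1 IH]; simpl; [constructor|].
  apply NoDup_app; auto.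
  - apply NoDup_map_NoDup_ForallPairs; auto. intros b b' _ _ e. now inversion e.
  - intros [a' b] h1 h2. apply in_map_iff in h1 as [? [e _]]. inversion e; subst.
    apply in_prod_iff in h2. tauto.
Qed.

Lemma last_cons {T} (x y : T) l : last (y :: l) x = last l y.
Proof.
  revert x y. induction l as [|a l IH]; intros x y; [reflexivity|].
  change (last (y :: a :: l) x) with (last (a :: l) x). now rewrite !IH.
Qed.

Section Card.
Context {X : Type}.

Definition classic_eq_dec (x y : X) : {x = y} + {x <> y} :=
  excluded_middle_informative (x = y).

Definition memb (x : X) (l : list X) : bool :=
  if in_dec classic_eq_dec x l then true else false.

Lemma memb_In x l : memb x l = true <-> In x l.
Proof. unfold memb; destruct (in_dec classic_eq_dec x l); split; auto; discriminate. Qed.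

Definition card (l : list X) : nat := length (nodup classic_eq_dec l).

Definition inter (A B : list X) : list X := filter (fun x => memb x B) A.

Lemma In_inter x A B : In x (inter A B) <-> In x A /\ In x B.
Proof. unfold inter. rewrite filter_In, memb_In. tauto. Qed.

Lemma card_incl A B : incl A B -> card A <= card B.
Proof.
  intros h. apply NoDup_incl_length; [apply NoDup_nodup|].
  intros x hx. apply nodup_In, h, (nodup_In classic_eq_dec), hx.
Qed.

Lemma card_cons x l : card (x :: l) = if in_dec classic_eq_dec x l then card l else S (card l).
Proof. unfold card; simpl. now destruct (in_dec classic_eq_dec x l). Qed.

Lemma card_cons_le x l : card (x :: l) <= S (card l).
Proof. rewrite card_cons. destruct (in_dec classic_eq_dec x l); lia. Qed.

Lemma card_NoDup l : NoDup l -> card l = length l.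
Proof.
  induction 1 as [|x l nx _ IH]; [reflexivity|].
  rewrite card_cons. destruct (in_dec classic_eq_dec x l); [contradiction|simpl; lia].
Qed.

Lemma card_app_inter A B : card (A ++ B) + card (inter A B) = card A + card B.
Proof.
  induction A as [|a A IH]; [unfold card, inter; simpl; lia|].
  change ((a :: A) ++ B) with (a :: (A ++ B)).
  unfold inter; simpl; fold (inter A B). unfold memb at 1.
  destruct (in_dec classic_eq_dec a B) as [aB|aB];
    rewrite !card_cons; try rewrite card_cons;
    repeat destruct in_dec as [?|?];
    rewrite ?in_app_iff, ?In_inter in *; tauto || lia.
Qed.

End Card.

Section Hall.
Variables (V W : Type) (nbr : V -> list W).

Definition nbhd (U : list W) (S : list V) : list W :=
  filter (fun y => negb (memb y U)) (flat_map nbr S).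

Definition hall_condition (elig : V -> Prop) (U : list W) : Prop :=
  forall S, (forall s, In s S -> elig s) -> card S <= card (nbhd U S).

Lemma In_nbhd U S y : In y (nbhd U S) <-> (exists s, In s S /\ In y (nbr s)) /\ ~ In y U.
Proof.
  unfold nbhd. rewrite filter_In, in_flat_map, <- memb_In.
  destruct (memb y U); simpl; intuition congruence.
Qed.

Lemma nbhd_app U A B : nbhd U (A ++ B) = nbhd U A ++ nbhd U B.
Proof. unfold nbhd. now rewrite flat_map_app, filter_app. Qed.

Lemma hall_condition_mono (e e' : V -> Prop) U :
  (forall v, e' v -> e v) -> hall_condition e U -> hall_condition e' U.
Proof. intros h hall S eS. apply hall. auto. Qed.

Lemma not_hall_condition e U : ~ hall_condition e U ->
  exists S, (forall s, In s S -> e s) /\ card (nbhd U S) < card S.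
Proof.
  intros nh. apply not_all_ex_not in nh as [S nh].
  apply imply_to_and in nh as [eS lt]. exists S. split; [auto|lia].
Qed.

(* A set [S] is tight when [card (nbhd U S) <= card S]; under Hall's condition
   tight sets are closed under union, by inclusion-exclusion. *)
Lemma tight_app e U A B : hall_condition e U ->
  (forall s, In s A -> e s) -> (forall s, In s B -> e s) ->
  card (nbhd U A) <= card A -> card (nbhd U B) <= card B ->
  card (nbhd U (A ++ B)) <= card (A ++ B).
Proof.
  intros hall eA eB tA tB.
  assert (hI : card (inter A B) <= card (nbhd U (inter A B))).
  { apply hall. intros s hs. apply In_inter in hs as [hs _]. auto. }
  assert (sub : card (nbhd U (inter A B)) <= card (inter (nbhd U A) (nbhd U B))).
  { apply card_incl. intros y hy. apply In_nbhd in hy as [[s [hs hy]] nU].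
    apply In_inter in hs as [hA hB]. apply In_inter. rewrite !In_nbhd. split; eauto. }
  rewrite nbhd_app.
  pose proof (card_app_inter A B). pose proof (card_app_inter (nbhd U A) (nbhd U B)). lia.
Qed.

Lemma hall_violator_tight e U y S : hall_condition e U -> (forall s, In s S -> e s) ->
  card (nbhd (y :: U) S) < card S -> card (nbhd U S) <= card S /\ In y (nbhd U S).
Proof.
  intros hall eS lt. pose proof (hall S eS) as hS.
  assert (sub : incl (nbhd U S) (y :: nbhd (y :: U) S)).
  { intros z hz. destruct (classic_eq_dec y z) as [<-|ne]; [now left|right].
    apply In_nbhd in hz as [hz nz]. apply In_nbhd. split; auto. intros [e'|e']; auto. }
  pose proof (card_incl _ _ sub). pose proof (card_cons_le y (nbhd (y :: U) S)).
  split; [lia|]. apply NNPP. intros ny.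
  assert (sub' : incl (nbhd U S) (nbhd (y :: U) S)).
  { intros z hz. destruct (sub z hz) as [<-|h]; tauto. }
  pose proof (card_incl _ _ sub'). lia.
Qed.

(* Otherwise each candidate [y] lies in the
   neighbourhood of a tight set, and the union [T] of these tight sets is tight
   while [x :: T] violates Hall's condition. *)
Lemma hall_step e U x : hall_condition e U -> e x ->
  exists y, In y (nbr x) /\ ~ In y U /\ hall_condition (fun v => e v /\ v <> x) (y :: U).
Proof.
  intros hall ex. apply NNPP. intros none.
  assert (cover : forall Y, incl Y (nbhd U [x]) -> exists T,
    (forall s, In s T -> e s /\ s <> x) /\ card (nbhd U T) <= card T /\ incl Y (nbhd U T)).
  { induction Y as [|y Y IH]; intros hY.
    - exists []. split; [intros s []|]. split; [unfold card, nbhd; simpl; lia|]. intros z [].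
    - destruct IH as [T [eT [tT cT]]]; [intros z hz; apply hY; now right|].
      assert (hy : In y (nbhd U [x])) by (apply hY; now left).
      apply In_nbhd in hy as [[x' [[<-|[]] hy]] nyU].
      destruct (not_hall_condition (fun v => e v /\ v <> x) (y :: U)) as [S [eS vS]].
      { intros h. apply none. eauto. }
      destruct (hall_violator_tight e U y S hall (fun s hs => proj1 (eS s hs)) vS) as [tS yS].
      exists (T ++ S). split; [|split].
      + intros s hs. apply in_app_iff in hs as [hs|hs]; auto.
      + apply (tight_app e); auto; intros s hs; [apply eT|apply eS]; auto.
      + rewrite nbhd_app. intros z [<-|hz]; apply in_or_app; auto. }
  destruct (cover (nbhd U [x]) (incl_refl _)) as [T [eT [tT cT]]].
  assert (xT : ~ In x T) by (intros h; now apply (eT x)).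
  assert (hx : card (x :: T) <= card (nbhd U ([x] ++ T))).
  { apply hall. intros s [<-|hs]; [auto|apply eT; auto]. }
  assert (sub : incl (nbhd U ([x] ++ T)) (nbhd U T)).
  { rewrite nbhd_app. apply incl_app; [auto|apply incl_refl]. }
  pose proof (card_incl _ _ sub). rewrite card_cons in hx.
  destruct (in_dec classic_eq_dec x T); [contradiction|lia].
Qed.

Section Countable.
Variables (Base : V -> Prop) (enum : nat -> list V).
Hypothesis inhW : inhabited W.
Hypothesis enum_Base : forall v, Base v -> exists n, In v (enum n).
Hypothesis hall0 : hall_condition Base [].

Definition partial_matching (s : list (V * W)) : Prop :=
  (forall v w, In (v, w) s -> Base v /\ In w (nbr v)) /\
  NoDup (map fst s) /\ NoDup (map snd s) /\
  hall_condition (fun v => Base v /\ ~ In v (map fst s)) (map snd s).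

Lemma partial_matching_add s x : partial_matching s ->
  exists s', partial_matching s' /\ incl s s' /\ (Base x -> In x (map fst s')).
Proof.
  intros hs. pose proof hs as [hn [n1 [n2 hall]]].
  destruct (classic (Base x /\ ~ In x (map fst s))) as [[bx nx]|matched].
  - destruct (hall_step _ _ x hall (conj bx nx)) as [y [hy [ny hall']]].
    exists ((x, y) :: s). split; [split; [|split; [|split]]|split].
    + intros v w [e|h]; [inversion e; subst; auto|auto].
    + constructor; auto.
    + constructor; auto.
    + eapply hall_condition_mono; [|exact hall']. simpl.
      intros v [bv nv]. split; [split; [exact bv|]|]; intros h; apply nv; auto.
    + intros a ha. now right.
    + intros _. now left.
  - exists s. split; [exact hs|split; [apply incl_refl|]].
    intros bx. apply NNPP. intros nx. auto.
Qed.

Lemma partial_matching_add_list s L : partial_matching s ->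
  exists s', partial_matching s' /\ incl s s' /\ (forall v, In v L -> Base v -> In v (map fst s')).
Proof.
  revert s. induction L as [|x L IH]; intros s hs.
  - exists s. split; [auto|split; [apply incl_refl|intros v []]].
  - destruct (IH s hs) as [s1 [h1 [i1 c1]]].
    destruct (partial_matching_add s1 x h1) as [s2 [h2 [i2 c2]]].
    exists s2. split; [auto|split; [eauto using incl_tran|]].
    intros v [<-|hv] bv; [auto|apply (incl_map fst i2); auto].
Qed.

Fixpoint matching_stage (n : nat) : list (V * W) :=
  match n with
  | 0 => []
  | S n => epsilon (inhabits []) (fun s => partial_matching s /\ incl (matching_stage n) s /\
             forall v, In v (enum n) -> Base v -> In v (map fst s))
  end.

Lemma matching_stage_S n : partial_matching (matching_stage n) ->
  partial_matching (matching_stage (S n)) /\ incl (matching_stage n) (matching_stage (S n)) /\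
  forall v, In v (enum n) -> Base v -> In v (map fst (matching_stage (S n))).
Proof.
  intros h. simpl. apply (epsilon_spec (inhabits [])). now apply partial_matching_add_list.
Qed.

Lemma matching_stage_partial n : partial_matching (matching_stage n).
Proof.
  induction n as [|n IH]; [|apply matching_stage_S; auto].
  split; [intros v w []|]. split; [constructor|]. split; [constructor|].
  eapply hall_condition_mono; [|exact hall0]. tauto.
Qed.

Lemma matching_stage_mono n n' : n <= n' -> incl (matching_stage n) (matching_stage n').
Proof.
  induction 1 as [|n' _ IH]; [apply incl_refl|].
  eapply incl_tran; [exact IH|apply matching_stage_S, matching_stage_partial].
Qed.

(* The matching is the union of an increasing chain of finite partial
   matchings, each preserving Hall's condition for the unmatched vertices. *)
Theorem hall_countable : exists f : V -> W,
  (forall v, Base v -> In (f v) (nbr v)) /\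
  (forall v v', Base v -> Base v' -> f v = f v' -> v = v').
Proof.
  set (f := fun v => epsilon inhW (fun w => exists n, In (v, w) (matching_stage n))).
  assert (hf : forall v, Base v -> exists n, In (v, f v) (matching_stage n)).
  { intros v bv. apply (epsilon_spec inhW (fun w => exists n, In (v, w) (matching_stage n))).
    destruct (enum_Base v bv) as [n hn].
    destruct (matching_stage_S n (matching_stage_partial n)) as [_ [_ cover]].
    destruct (proj1 (in_map_iff _ _ _) (cover v hn bv)) as [[v' w] [<- hw]]. eauto. }
  exists f. split.
  - intros v bv. destruct (hf v bv) as [n hn].
    destruct (matching_stage_partial n) as [hnbr _]. apply (hnbr _ _ hn).
  - intros v v' bv bv' e. destruct (hf v bv) as [n hn]. destruct (hf v' bv') as [n' hn'].
    apply (matching_stage_mono n (n + n')) in hn; [|lia].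
    apply (matching_stage_mono n' (n + n')) in hn'; [|lia].
    rewrite e in hn. destruct (matching_stage_partial (n + n')) as [_ [_ [nd _]]].
    now injection (NoDup_map_inj_in snd _ _ _ nd hn hn').
Qed.
End Countable.
End Hall.

Section GroupLemmas.
Variable G : Grp.

Lemma gmul_cancel_l (a x y : G) : gmul a x = gmul a y -> x = y.
Proof. intros h. rewrite <- (gmul1l G x), <- (gmul1l G y), <- (gmulVl G a), <- !gmulA, h. auto. Qed.

Lemma gmul_cancel_r (a x y : G) : gmul x a = gmul y a -> x = y.
Proof. intros h. rewrite <- (gmul1r G x), <- (gmul1r G y), <- (gmulVr G a), !gmulA, h. auto. Qed.

Lemma ginvK (x : G) : ginv (ginv x) = x.
Proof. apply (gmul_cancel_l (ginv x)). now rewrite gmulVr, gmulVl. Qed.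

Lemma ginv_inj (x y : G) : ginv x = ginv y -> x = y.
Proof. intros h. now rewrite <- (ginvK x), <- (ginvK y), h. Qed.

Lemma ginvM (x y : G) : ginv (gmul x y) = gmul (ginv y) (ginv x).
Proof.
  apply (gmul_cancel_l (gmul x y)).
  now rewrite gmulVr, gmulA, <- (gmulA G x y), gmulVr, gmul1r, gmulVr.
Qed.

Lemma ginv1 : ginv (@gone G) = gone.
Proof. rewrite <- (gmul1l G (ginv gone)). apply gmulVr. Qed.

Lemma gmulKV (x y : G) : gmul (ginv x) (gmul x y) = y.
Proof. now rewrite gmulA, gmulVl, gmul1l. Qed.

Lemma gmulVK (x y : G) : gmul x (gmul (ginv x) y) = y.
Proof. now rewrite gmulA, gmulVr, gmul1l. Qed.

Lemma gmulKr (x y : G) : gmul (gmul x (ginv y)) y = x.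
Proof. now rewrite <- gmulA, gmulVl, gmul1r. Qed.

End GroupLemmas.

Definition gprod {G : Grp} (l : list G) : G := fold_right gmul gone l.

Lemma gprod_app {G : Grp} (l1 l2 : list G) : gprod (l1 ++ l2) = gmul (gprod l1) (gprod l2).
Proof.
  induction l1 as [|a l1 IH]; simpl; [now rewrite gmul1l|].
  unfold gprod in *. simpl. now rewrite IH, gmulA.
Qed.

Fixpoint ball {G : Grp} (B : list G) (n : nat) : list G :=
  match n with
  | 0 => [gone]
  | S n => ball B n ++ flat_map (fun b => map (gmul b) (ball B n)) B
  end.

Lemma ball_one {G : Grp} (B : list G) n : In gone (ball B n).
Proof. induction n; simpl; auto using in_or_app. Qed.

Lemma ball_mul {G : Grp} (B : list G) n b x :
  In b B -> In x (ball B n) -> In (gmul b x) (ball B (S n)).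
Proof. intros hb hx. simpl. apply in_or_app. right. apply in_flat_map. eauto using in_map. Qed.

Lemma ball_mono {G : Grp} (B : list G) n n' x : n <= n' -> In x (ball B n) -> In x (ball B n').
Proof. induction 1; simpl; auto using in_or_app. Qed.

Lemma ball_mul_ball {G : Grp} (B : list G) n n' x y :
  In x (ball B n) -> In y (ball B n') -> In (gmul x y) (ball B (n + n')).
Proof.
  revert x. induction n as [|n IH]; intros x hx hy; simpl in hx.
  - destruct hx as [<-|[]]. now rewrite gmul1l.
  - apply in_app_iff in hx as [hx|hx]; [apply (ball_mono B (n + n')); auto; lia|].
    apply in_flat_map in hx as [b [hb hx]]. apply in_map_iff in hx as [x' [<- hx']].
    rewrite <- gmulA. apply ball_mul; auto.
Qed.

Lemma ball_inv {G : Grp} (B : list G) n x : (forall b, In b B -> In (ginv b) B) ->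
  In x (ball B n) -> In (ginv x) (ball B n).
Proof.
  intros symB. revert x. induction n as [|n IH]; intros x hx; simpl in hx.
  - destruct hx as [<-|[]]. rewrite ginv1. apply ball_one.
  - apply in_app_iff in hx as [hx|hx]; [apply (ball_mono B n); auto|].
    apply in_flat_map in hx as [b [hb hx]]. apply in_map_iff in hx as [x' [<- hx']].
    rewrite ginvM, <- Nat.add_1_r. apply ball_mul_ball; auto.
    rewrite <- (gmul1r G (ginv b)). apply (ball_mul B 0); auto. apply ball_one.
Qed.

Section Hom.
Variables (G K : Grp) (p : G -> K).
Hypothesis hp : is_hom G K p.

Lemma hom1 : p gone = gone.
Proof. apply (gmul_cancel_l K (p gone)). now rewrite <- hp, !gmul1r. Qed.

Lemma homV x : p (ginv x) = ginv (p x).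
Proof. apply (gmul_cancel_l K (p x)). rewrite <- hp, !gmulVr. apply hom1. Qed.

Lemma hom_gprod l : p (gprod l) = gprod (map p l).
Proof.
  induction l as [|a l IH]; [apply hom1|].
  unfold gprod in *; simpl. now rewrite hp, IH.
Qed.

End Hom.

Section Mean.
Variables (H : Grp) (m : (H -> Prop) -> R).
Hypothesis m_ge0 : forall A, (0 <= m A)%R.
Hypothesis m_add : forall A B, (forall x, A x -> B x -> False) ->
  m (fun x => A x \/ B x) = (m A + m B)%R.
Hypothesis m_inv : forall (g : H) A, m (fun x => A (gmul (ginv g) x)) = m A.

Lemma mean_ext A B : (forall x, A x <-> B x) -> m A = m B.
Proof.
  intros h. f_equal. apply functional_extensionality. intros x.
  now apply propositional_extensionality.
Qed.

Lemma mean_mono A B : (forall x, A x -> B x) -> (m A <= m B)%R.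
Proof.
  intros h. rewrite (mean_ext B (fun x => A x \/ (B x /\ ~ A x))).
  - rewrite m_add; [pose proof (m_ge0 (fun x => B x /\ ~ A x)); lra|].
    intros x a [_ na]. auto.
  - intros x. split; [|intros [a|[b _]]; auto].
    intros b. destruct (classic (A x)); auto.
Qed.

Lemma mean_piecewise_translate (B : list H) (P : H -> H -> Prop) : NoDup B ->
  (forall b b' x, In b B -> In b' B -> P b x -> P b' x -> b = b') ->
  (forall b b' y, In b B -> In b' B ->
     P b (gmul (ginv b) y) -> P b' (gmul (ginv b') y) -> b = b') ->
  m (fun y => exists b, In b B /\ P b (gmul (ginv b) y)) =
  m (fun x => exists b, In b B /\ P b x).
Proof.
  induction 1 as [|b B nb nB IH]; intros disj disj'.
  { apply mean_ext. intros x. split; intros [b [[] _]]. }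
  assert (split_head : forall Q : H -> H -> Prop,
    (forall b' x, In b' B -> Q b x -> Q b' x -> b = b') ->
    m (fun x => exists c, In c (b :: B) /\ Q c x) =
    (m (Q b) + m (fun x => exists c, In c B /\ Q c x))%R).
  { intros Q hQ. rewrite <- m_add.
    - apply mean_ext. intros x. split.
      + intros [c [[<-|hc] q]]; [left|right]; eauto.
      + intros [q|[c [hc q]]]; [exists b|exists c]; simpl; auto.
    - intros x q [c [hc q']]. apply nb. now rewrite (hQ c x hc q q'). }
  rewrite (split_head (fun c y => P c (gmul (ginv c) y))),
          (split_head P), m_inv, IH; auto.
  - intros c c' x hc hc'. apply disj; simpl; auto.
  - intros c c' y hc hc'. apply disj'; simpl; auto.
  - intros c x hc. apply disj; simpl; auto.
  - intros c y hc. apply disj'; simpl; auto.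
Qed.

End Mean.

Section Doubling.
Variables (H : Grp) (B : list H).

Definition in_span (x : H) : Prop := exists n, In x (ball (B ++ map ginv B) n).

Lemma span_one : in_span gone.
Proof. exists 0. apply ball_one. Qed.

Lemma span_gen b : In b B -> in_span b.
Proof.
  intros hb. exists 1. rewrite <- (gmul1r H b).
  apply ball_mul; [apply in_or_app; auto|apply ball_one].
Qed.

Lemma span_mul x y : in_span x -> in_span y -> in_span (gmul x y).
Proof. intros [n hx] [n' hy]. exists (n + n'). now apply ball_mul_ball. Qed.

Lemma span_inv x : in_span x -> in_span (ginv x).
Proof.
  intros [n hx]. exists n. apply ball_inv; auto.
  intros b hb. apply in_app_iff in hb as [hb|hb]; apply in_or_app.
  - right. now apply in_map.
  - left. apply in_map_iff in hb as [c [<- hc]]. now rewrite ginvK.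
Qed.

Definition coset_rep (x : H) : H :=
  epsilon (inhabits gone) (fun y => exists h, in_span h /\ y = gmul h x).

Lemma coset_rep_spec x : in_span (gmul x (ginv (coset_rep x))).
Proof.
  assert (h : exists h, in_span h /\ coset_rep x = gmul h x).
  { apply (epsilon_spec (inhabits gone) (fun y => exists h, in_span h /\ y = gmul h x)).
    exists x, gone. split; [apply span_one|now rewrite gmul1l]. }
  destruct h as [h [hh ->]]. rewrite ginvM, gmulVK. now apply span_inv.
Qed.

Lemma coset_rep_mul c x : in_span c -> coset_rep (gmul c x) = coset_rep x.
Proof.
  intros hc. unfold coset_rep. f_equal. apply functional_extensionality. intros y.
  apply propositional_extensionality. split.
  - intros [h [hh ->]]. exists (gmul h c). split; [now apply span_mul|apply gmulA].
  - intros [h [hh ->]]. exists (gmul h (ginv c)). split.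
    + apply span_mul; auto. now apply span_inv.
    + now rewrite <- gmulA, gmulKV.
Qed.

Definition translates (v : H * bool) : list H := map (fun b => gmul b (fst v)) B.

Definition no_folner_set : Prop := forall Psi Y : list H,
  Psi <> [] -> NoDup Psi -> NoDup Y ->
  (forall b x, In b B -> In x Psi -> In (gmul b x) Y) -> 2 * length Psi <= length Y.

Lemma hall_condition_no_folner : no_folner_set ->
  hall_condition (H * bool) H translates (fun _ => True) [].
Proof.
  intros nf S _. destruct S as [|s0 S']; [unfold card; simpl; lia|].
  set (Psi := nodup classic_eq_dec (map fst (s0 :: S'))).
  assert (hPsi : 2 * length Psi <= card (nbhd _ _ translates [] (s0 :: S'))).
  { apply nf; try apply NoDup_nodup.
    - intros e. assert (h : In (fst s0) Psi) by (apply nodup_In; now left).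
      rewrite e in h. destruct h.
    - intros b x hb hx. apply nodup_In, In_nbhd. split; [|intros []].
      apply nodup_In, in_map_iff in hx as [s [<- hs]]. exists s. split; auto.
      apply in_map_iff. eauto. }
  assert (hS : card (s0 :: S') <= card (list_prod Psi [true; false])).
  { apply card_incl. intros [x j] h. apply in_prod_iff. split.
    - apply nodup_In. apply (in_map fst) in h. auto.
    - destruct j; simpl; auto. }
  rewrite (card_NoDup (list_prod Psi [true; false])), length_prod in hS; [simpl in hS; lia|].
  apply NoDup_list_prod; [apply NoDup_nodup|repeat constructor; simpl; intuition discriminate].
Qed.

(* Without Folner sets, Hall's theorem gives an injective two-to-one
   compression [phi], first on (span B) x bool and then on every right coset. *)
Lemma doubling_map_no_folner : no_folner_set ->
  exists phi : H -> bool -> H,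
    (forall x j, exists b, In b B /\ phi x j = gmul b x) /\
    (forall x j x' j', phi x j = phi x' j' -> x = x' /\ j = j').
Proof.
  intros nf.
  destruct (hall_countable (H * bool) H translates
    (fun v => in_span (fst v)) (fun n => list_prod (ball (B ++ map ginv B) n) [true; false]))
    as [f0 [f0_nbr f0_inj]].
  - exact (inhabits gone).
  - intros [x j] [n hn]. exists n. apply in_prod_iff.
    split; [exact hn|destruct j; simpl; auto].
  - eapply hall_condition_mono; [|apply hall_condition_no_folner; auto]. now intros.
  - set (part := fun x => gmul x (ginv (coset_rep x))).
    exists (fun x j => gmul (f0 (part x, j)) (coset_rep x)).
    assert (phi_nbr : forall x j,
      exists b, In b B /\ gmul (f0 (part x, j)) (coset_rep x) = gmul b x).
    { intros x j. pose proof (f0_nbr (part x, j) (coset_rep_spec x)) as h.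
      apply in_map_iff in h as [b [e hb]]. exists b. split; auto.
      rewrite <- e. unfold part. simpl. now rewrite <- gmulA, gmulKr. }
    split; [exact phi_nbr|]. intros x j x' j' e.
    destruct (phi_nbr x j) as [b [hb eb]]. destruct (phi_nbr x' j') as [b' [hb' eb']].
    assert (ex : x' = gmul (gmul (ginv b') b) x).
    { now rewrite <- gmulA, <- eb, e, eb', gmulKV. }
    assert (er : coset_rep x' = coset_rep x).
    { rewrite ex. apply coset_rep_mul. apply span_mul; [apply span_inv|]; now apply span_gen. }
    rewrite er in e. apply gmul_cancel_r in e.
    apply f0_inj in e; try apply coset_rep_spec.
    injection e as ep ej. split; auto. unfold part in ep. rewrite er in ep.
    now apply gmul_cancel_r in ep.
Qed.

End Doubling.

(* An invariant mean forbids an injective [phi : H x bool -> H] moving points by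
   elements of a finite set: each half [phi (_, j)] has mean 1 by
   [mean_piecewise_translate], yet the two halves are disjoint. *)
Lemma amenable_no_doubling_map (H : Grp) (B : list H) (phi : H -> bool -> H) :
  amenable H ->
  (forall x j, exists b, In b B /\ phi x j = gmul b x) ->
  (forall x j x' j', phi x j = phi x' j' -> x = x' /\ j = j') -> False.
Proof.
  intros [m [m_ge0 [m_one [m_add m_inv]]]] phi_nbr phi_inj.
  set (B' := nodup classic_eq_dec B).
  assert (half : forall j, m (fun y => exists x, phi x j = y) = 1%R).
  { intros j. rewrite <- m_one.
    transitivity
      (m (fun y => exists b, In b B' /\ phi (gmul (ginv b) y) j = gmul b (gmul (ginv b) y))).
    { apply mean_ext. intros y. split.
      - intros [x <-]. destruct (phi_nbr x j) as [b [hb e]]. exists b.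
        rewrite gmulVK, e, gmulKV. split; [apply nodup_In|]; auto.
      - intros [b [_ e]]. rewrite gmulVK in e. eauto. }
    rewrite (mean_piecewise_translate H m m_add m_inv B' (fun b x => phi x j = gmul b x));
      [|apply NoDup_nodup| |].
    - apply mean_ext. intros x. split; [auto|intros _].
      destruct (phi_nbr x j) as [b [hb e]]. exists b. split; [apply nodup_In|]; auto.
    - intros b b' x _ _ e e'. rewrite e in e'. now apply gmul_cancel_r in e'.
    - intros b b' y _ _ e e'. rewrite gmulVK in e, e'.
      assert (same : phi (gmul (ginv b) y) j = phi (gmul (ginv b') y) j) by congruence.
      apply phi_inj in same as [same _]. now apply gmul_cancel_r, ginv_inj in same. }
  assert (two : m (fun y => (exists x, phi x true = y) \/ (exists x, phi x false = y)) = 2%R).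
  { rewrite m_add, !half; [lra|]. intros y [x <-] [x' e].
    apply phi_inj in e as [_ e]. discriminate. }
  pose proof (mean_mono H m m_ge0 m_add
    (fun y => (exists x, phi x true = y) \/ (exists x, phi x false = y)) (fun _ => True)
    (fun _ _ => I)).
  lra.
Qed.

Theorem amenable_weak_folner (H : Grp) (B : list H) : amenable H ->
  exists Psi Y : list H, Psi <> [] /\ NoDup Psi /\ NoDup Y /\
    (forall b x, In b B -> In x Psi -> In (gmul b x) Y) /\ length Y < 2 * length Psi.
Proof.
  intros am. apply NNPP. intros none.
  destruct (doubling_map_no_folner H B) as [phi [phi_nbr phi_inj]].
  - intros Psi Y h1 h2 h3 h4. apply Nat.nlt_ge. intros h5. apply none. exists Psi, Y. auto.
  - exact (amenable_no_doubling_map H B phi am phi_nbr phi_inj).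
Qed.

Theorem amenable_weak_folner_r (H : Grp) (A : list H) : amenable H ->
  exists Phi Y : list H, Phi <> [] /\ NoDup Phi /\ NoDup Y /\
    (forall f a, In f Phi -> In a A -> In (gmul f a) Y) /\ length Y < 2 * length Phi.
Proof.
  intros am.
  destruct (amenable_weak_folner H (map ginv A) am) as [Psi [Y [ne [nPsi [nY [cov lt]]]]]].
  exists (map ginv Psi), (map ginv Y). rewrite !length_map.
  split; [destruct Psi; simpl; congruence|].
  split; [apply NoDup_map_NoDup_ForallPairs; auto; intros ? ? _ _; apply ginv_inj|].
  split; [apply NoDup_map_NoDup_ForallPairs; auto; intros ? ? _ _; apply ginv_inj|].
  split; [|exact lt].
  intros f a hf ha. apply in_map_iff in hf as [psi [<- hpsi]].
  rewrite <- (ginvK H a), <- ginvM. apply in_map, cov; auto. now apply in_map.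
Qed.

Section CayleyPaths.
Variables (G : Grp) (S : list G).

Lemma chain_word x l : chain (cayley_adj G S) x l ->
  exists ws, incl ws S /\ length ws = length l /\ last l x = gmul x (gprod ws).
Proof.
  revert x. induction l as [|y l IH]; intros x h.
  - exists []. repeat split; [intros ? []|]. simpl. now rewrite gmul1r.
  - destruct h as [[s [hs ->]] hc]. destruct (IH _ hc) as [ws [w1 [w2 w3]]].
    exists (s :: ws). split; [now apply incl_cons|]. split; [simpl; auto|].
    rewrite last_cons, w3. unfold gprod; simpl. now rewrite gmulA.
Qed.

Lemma word_chain x ws : incl ws S ->
  exists l, chain (cayley_adj G S) x l /\ length l = length ws /\ last l x = gmul x (gprod ws).
Proof.
  revert x. induction ws as [|s ws IH]; intros x h.
  - exists []. repeat split. simpl. now rewrite gmul1r.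
  - destruct (IH (gmul x s)) as [l [l1 [l2 l3]]]; [intros t ht; apply h; now right|].
    exists (gmul x s :: l). split; [split; [exists s; split; [apply h; now left|auto]|auto]|].
    split; [simpl; auto|]. rewrite last_cons, l3. unfold gprod; simpl. now rewrite gmulA.
Qed.

Lemma chain_ball x l v : chain (cayley_adj G S) x l -> In v (x :: l) ->
  exists sg, In sg (ball S (length l)) /\ v = gmul x sg.
Proof.
  revert x. induction l as [|y l IH]; intros x h hv.
  - destruct hv as [<-|[]]. exists gone. split; [apply ball_one|now rewrite gmul1r].
  - destruct h as [[s [hs ->]] hc]. destruct hv as [<-|hv].
    + exists gone. split; [apply ball_one|now rewrite gmul1r].
    + destruct (IH _ hc hv) as [sg [h1 ->]]. exists (gmul s sg). split.
      * now apply ball_mul.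
      * now rewrite gmulA.
Qed.

End CayleyPaths.

Section Projection.
Variables (G K : Grp) (p : G -> K) (SG : list G) (SK : list K).
Hypothesis hp : is_hom G K p.
Hypothesis SG_proj : forall s, In s SG -> In (p s) SK \/ p s = gone.

(* Generators mapped to the identity become loops and are dropped. *)
Lemma chain_project x l : chain (cayley_adj G SG) x l ->
  exists l', chain (cayley_adj K SK) (p x) l' /\ last l' (p x) = p (last l x) /\
    length l' <= length l /\ forall w, In w (p x :: l') -> exists v, In v (x :: l) /\ p v = w.
Proof.
  revert x. induction l as [|y l IH]; intros x h.
  - exists []. repeat split; auto. intros w [<-|[]]. exists x. simpl; auto.
  - destruct h as [[s [hs ->]] hc]. destruct (IH _ hc) as [l' [c1 [c2 [c3 c4]]]].
    rewrite last_cons. destruct (SG_proj s hs) as [hs'|hs'].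
    + exists (p (gmul x s) :: l'). split; [split; [exists (p s); split; auto|auto]|].
      split; [now rewrite last_cons|]. split; [simpl; lia|].
      intros w [<-|hw]; [exists x; simpl; auto|].
      destruct (c4 w hw) as [v [hv ev]]. exists v. split; [right|]; auto.
    + rewrite hp, hs', gmul1r in *. exists l'. split; [auto|split; [auto|split; [simpl; lia|]]].
      intros w hw. destruct (c4 w hw) as [v [hv ev]]. exists v. split; [right|]; auto.
Qed.

End Projection.

Lemma symmetric_app_ginv (G : Grp) (T : list G) : symmetric_set G (T ++ map ginv T).
Proof.
  intros s hs. apply in_app_iff in hs as [hs|hs]; apply in_or_app.
  - right. now apply in_map.
  - left. apply in_map_iff in hs as [t [<- ht]]. now rewrite ginvK.
Qed.

Lemma generates_refine (G : Grp) (SG S : list G) : generates G SG ->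
  (forall s, In s SG -> exists w, incl w S /\ s = gprod w) -> generates G S.
Proof.
  intros gen words g. destruct (gen g) as [w [hw ->]]. clear gen.
  induction w as [|s w IH]; [exists []; split; [intros ? []|reflexivity]|].
  destruct IH as [w' [hw' e]]; [intros t ht; apply hw; now right|].
  destruct (words s (hw s (or_introl eq_refl))) as [ws [hws es]].
  exists (ws ++ w'). split; [now apply incl_app|].
  change (gmul s (gprod w) = gprod (ws ++ w')). rewrite gprod_app, <- es.
  unfold gprod in *. now rewrite <- e.
Qed.

(* Each generator [s] of [G] is rewritten as [L k_1 ... L k_n c], where
   [k_1 ... k_n] spells [p s] in [SK] and the correction [c] lies in the kernel. *)
Lemma lift_generating_set (G K : Grp) (p : G -> K) (L : K -> G) (SK : list K) :
  is_hom G K p -> (forall k, p (L k) = k) -> finitely_generated G -> generates K SK ->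
  symmetric_set K SK ->
  exists S : list G, symmetric_set G S /\ generates G S /\
    (forall k, In k SK -> In (L k) S) /\ (forall s, In s S -> In (p s) SK \/ p s = gone).
Proof.
  intros hp pL [SG genG] genK symK.
  destruct (choice (fun g w => incl w SK /\ p g = gprod w) (fun g => genK (p g))) as [wK hwK].
  set (c := fun g : G => gmul (ginv (gprod (map L (wK g)))) g).
  assert (pc : forall g, p (c g) = gone).
  { intros g. unfold c. rewrite hp, (homV _ _ _ hp), (hom_gprod _ _ _ hp), map_map.
    rewrite (map_ext (fun k => p (L k)) (fun k => k) pL), map_id, <- (proj2 (hwK g)).
    apply gmulVl. }
  set (T := map L SK ++ map c SG).
  assert (T_proj : forall t, In t T -> In (p t) SK \/ p t = gone).
  { intros t ht. apply in_app_iff in ht as [ht|ht]; apply in_map_iff in ht as [x [<- hx]].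
    - left. now rewrite pL.
    - right. apply pc. }
  exists (T ++ map ginv T). split; [apply symmetric_app_ginv|]. split; [|split].
  - apply (generates_refine G SG); auto. intros s hs.
    exists (map L (wK s) ++ [c s]). split.
    + apply incl_app; intros t ht; apply in_or_app; left; apply in_or_app.
      * left. apply in_map_iff in ht as [k [<- hk]]. apply in_map, (proj1 (hwK s)), hk.
      * right. destruct ht as [<-|[]]. now apply in_map.
    + rewrite gprod_app. unfold c, gprod at 2. simpl. now rewrite gmul1r, gmulVK.
  - intros k hk. apply in_or_app. left. apply in_or_app. left. now apply in_map.
  - intros s hs. apply in_app_iff in hs as [hs|hs]; [auto|].
    apply in_map_iff in hs as [t [<- ht]]. rewrite (homV _ _ _ hp).
    destruct (T_proj t ht) as [h|h]; [left; now apply symK|right; rewrite h; apply ginv1].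
Qed.

Definition extraterrestrial_witness {V : Type} (adj : V -> V -> Prop) (m k r : nat)
    (U F O : list V) (mu : V -> V) : Prop :=
  U <> [] /\ NoDup U /\ NoDup F /\ NoDup O /\
  disjoint U F /\ disjoint U O /\ disjoint F O /\
  length U >= m * length F /\
  Permutation (map mu U) O /\
  (forall u, In u U -> dist_le adj u (mu u) k) /\
  (forall x l, In x U -> chain adj x l -> In (last l x) O ->
     (exists v, In v (x :: l) /\ In v F) \/ r <= length l).

Lemma disjoint_proj {A B} (f : A -> B) (X Y : list A) (X' Y' : list B) :
  disjoint X' Y' -> (forall x, In x X -> In (f x) X') -> (forall y, In y Y -> In (f y) Y') ->
  disjoint X Y.
Proof. intros d hX hY v h1 h2. exact (d (f v) (hX v h1) (hY v h2)). Qed.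

Section Lifting.
Variables (H G K : Grp) (i : H -> G) (p : G -> K).
Hypothesis hi : is_hom H G i.
Hypothesis hp : is_hom G K p.
Hypothesis i_inj : forall x y, i x = i y -> x = y.
Hypothesis ker : forall g, p g = gone <-> exists h, i h = g.
Variables (L : K -> G) (SK : list K) (S : list G).
Hypothesis pL : forall k, p (L k) = k.
Hypothesis S_lift : forall k, In k SK -> In (L k) S.
Hypothesis S_proj : forall s, In s S -> In (p s) SK \/ p s = gone.

Lemma p_i h : p (i h) = gone.
Proof. apply ker. eauto. Qed.

(* [lift f k] is the point of the fibre over [k] with coordinate [f] in [H];
   the section [L] fixes the origin of every fibre. *)
Definition lift (f : H) (k : K) : G := gmul (i f) (L k).

Lemma p_lift f k : p (lift f k) = k.
Proof. unfold lift. now rewrite hp, p_i, gmul1l. Qed.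

Lemma lift_inj f k f' k' : lift f k = lift f' k' -> f = f' /\ k = k'.
Proof.
  intros e. assert (ek : k = k') by (rewrite <- (p_lift f k), e; apply p_lift).
  subst k'. unfold lift in e. apply gmul_cancel_r in e. auto.
Qed.

Lemma lift_mul f f' k : gmul (i f) (lift f' k) = lift (gmul f f') k.
Proof. unfold lift. now rewrite hi, gmulA. Qed.

Definition fibre_coord (d : G) : H :=
  epsilon (inhabits gone) (fun h => i h = gmul d (ginv (L (p d)))).

Lemma lift_fibre_coord d : lift (fibre_coord d) (p d) = d.
Proof.
  assert (h : i (fibre_coord d) = gmul d (ginv (L (p d)))).
  { apply (epsilon_spec (inhabits gone) (fun h => i h = gmul d (ginv (L (p d))))).
    apply ker. rewrite hp, (homV _ _ _ hp), pL. apply gmulVr. }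
  unfold lift. now rewrite h, gmulKr.
Qed.

Definition lift_set (Phi : list H) (U : list K) : list G :=
  map (fun uf => lift (snd uf) (fst uf)) (list_prod U Phi).

Lemma In_lift_set Phi U x :
  In x (lift_set Phi U) <-> exists u f, In u U /\ In f Phi /\ x = lift f u.
Proof.
  unfold lift_set. rewrite in_map_iff. split.
  - intros [[u f] [<- h]]. apply in_prod_iff in h. exists u, f. tauto.
  - intros [u [f [hu [hf ->]]]]. exists (u, f). split; [reflexivity|now apply in_prod_iff].
Qed.

Lemma p_In_lift_set Phi U x : In x (lift_set Phi U) -> In (p x) U.
Proof. intros h. apply In_lift_set in h as [u [f [hu [_ ->]]]]. now rewrite p_lift. Qed.

Lemma NoDup_lift_set Phi U : NoDup Phi -> NoDup U -> NoDup (lift_set Phi U).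
Proof.
  intros nPhi nU. apply NoDup_map_NoDup_ForallPairs; [|now apply NoDup_list_prod].
  intros [u f] [u' f'] _ _ e. apply lift_inj in e as [ef eu]. simpl in *. now subst.
Qed.

Lemma length_lift_set Phi U : length (lift_set Phi U) = length U * length Phi.
Proof. unfold lift_set. now rewrite length_map, length_prod. Qed.

Definition lift_region (U : list K) (r : nat) : list G :=
  flat_map (fun u => map (gmul (L u)) (ball S r)) U.

Lemma short_chain_coords Phi Y U r x l v :
  (forall f a, In f Phi -> In a (map fibre_coord (lift_region U r)) -> In (gmul f a) Y) ->
  In x (lift_set Phi U) -> chain (cayley_adj G S) x l -> length l <= r -> In v (x :: l) ->
  exists y, In y Y /\ v = lift y (p v).
Proof.
  intros cov hx hc hl hv. apply In_lift_set in hx as [u [f [hu [hf ->]]]].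
  destruct (chain_ball G S _ l v hc hv) as [sg [hsg ->]].
  set (d := gmul (L u) sg).
  assert (hd : In d (lift_region U r)).
  { apply in_flat_map. exists u. split; [auto|]. apply in_map, (ball_mono S (length l)); auto. }
  assert (ev : gmul (lift f u) sg = gmul (i f) d) by (unfold lift, d; now rewrite gmulA).
  exists (gmul f (fibre_coord d)). split; [apply cov; auto; now apply in_map|].
  rewrite ev, <- lift_mul, hp, p_i, gmul1l. now rewrite lift_fibre_coord.
Qed.

Section LiftMap.
Variables (k : nat) (mu : K -> K).

Definition lift_word (x : K) : list K :=
  epsilon (inhabits []) (fun ws => incl ws SK /\ length ws <= k /\ mu x = gmul x (gprod ws)).

Lemma lift_word_spec x : dist_le (cayley_adj K SK) x (mu x) k ->
  incl (lift_word x) SK /\ length (lift_word x) <= k /\ mu x = gmul x (gprod (lift_word x)).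
Proof.
  intros [l [hc [he hl]]]. unfold lift_word.
  apply (epsilon_spec (inhabits [])
    (fun ws => incl ws SK /\ length ws <= k /\ mu x = gmul x (gprod ws))).
  destruct (chain_word K SK x l hc) as [ws [w1 [w2 w3]]].
  exists ws. split; [auto|split; [lia|congruence]].
Qed.

Definition lift_mu (g : G) : G := gmul g (gprod (map L (lift_word (p g)))).

Lemma p_lift_mu g : dist_le (cayley_adj K SK) (p g) (mu (p g)) k -> p (lift_mu g) = mu (p g).
Proof.
  intros h. unfold lift_mu. rewrite hp, (hom_gprod _ _ _ hp), map_map.
  rewrite (map_ext (fun k => p (L k)) (fun k => k) pL), map_id.
  symmetry. apply lift_word_spec, h.
Qed.

Lemma lift_mu_dist g : dist_le (cayley_adj K SK) (p g) (mu (p g)) k ->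
  dist_le (cayley_adj G S) g (lift_mu g) k.
Proof.
  intros h. destruct (lift_word_spec _ h) as [w1 [w2 _]].
  destruct (word_chain G S g (map L (lift_word (p g)))) as [l [c1 [c2 c3]]].
  { intros s hs. apply in_map_iff in hs as [kk [<- hkk]]. apply S_lift, w1, hkk. }
  exists l. split; [auto|split; [auto|]]. now rewrite c2, length_map.
Qed.

Lemma lift_mu_fibre_inj g g' : p g = p g' -> lift_mu g = lift_mu g' -> g = g'.
Proof. unfold lift_mu. intros -> e. now apply gmul_cancel_r in e. Qed.

Lemma lift_separation r U F O Phi Y x l :
  (forall x l, In x U -> chain (cayley_adj K SK) x l -> In (last l x) O ->
     (exists v, In v (x :: l) /\ In v F) \/ r <= length l) ->
  (forall u, In u U -> dist_le (cayley_adj K SK) u (mu u) k) ->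
  (forall u, In u U -> In (mu u) O) ->
  (forall f a, In f Phi -> In a (map fibre_coord (lift_region U r)) -> In (gmul f a) Y) ->
  In x (lift_set Phi U) -> chain (cayley_adj G S) x l ->
  In (last l x) (map lift_mu (lift_set Phi U)) ->
  (exists v, In v (x :: l) /\ In v (lift_set Y F)) \/ r <= length l.
Proof.
  intros sep dist muO cov hx hc hl.
  destruct (le_lt_dec r (length l)) as [hr|hr]; [now right|left].
  destruct (chain_project G K p S SK hp S_proj x l hc) as [l' [c1 [c2 [c3 c4]]]].
  assert (hO : In (last l' (p x)) O).
  { rewrite c2. apply in_map_iff in hl as [g [<- hg]].
    apply p_In_lift_set in hg. rewrite p_lift_mu; auto. }
  destruct (sep (p x) l' (p_In_lift_set _ _ _ hx) c1 hO) as [[w [hw wF]]|hr']; [|lia].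
  destruct (c4 w hw) as [v [hv <-]]. exists v. split; [auto|].
  destruct (short_chain_coords Phi Y U r x l v cov hx hc ltac:(lia) hv) as [y [hy ev]].
  apply In_lift_set. exists (p v), y. auto.
Qed.

(* Over each point of [U], [F], [O] sit [|Phi|] resp. at most [|Y| < 2 |Phi|]
   points of the lifted sets, so the ratio [2 m] in [K] becomes [m] in [G]. *)
Lemma lift_witness m r U F O Phi Y :
  extraterrestrial_witness (cayley_adj K SK) (2 * m) k r U F O mu ->
  Phi <> [] -> NoDup Phi -> NoDup Y ->
  (forall f a, In f Phi -> In a (map fibre_coord (lift_region U r)) -> In (gmul f a) Y) ->
  length Y < 2 * length Phi ->
  extraterrestrial_witness (cayley_adj G S) m k r (lift_set Phi U)
    (nodup classic_eq_dec (lift_set Y F)) (map lift_mu (lift_set Phi U)) lift_mu.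
Proof.
  intros [U0 [nU [nF [nO [dUF [dUO [dFO [lenU [perm [dist sep]]]]]]]]]] Phi0 nPhi nY cov lenY.
  assert (muO : forall u, In u U -> In (mu u) O).
  { intros u hu. apply (Permutation_in _ perm), in_map, hu. }
  assert (pU : forall x, In x (lift_set Phi U) -> In (p x) U) by apply p_In_lift_set.
  assert (pF : forall x, In x (nodup classic_eq_dec (lift_set Y F)) -> In (p x) F).
  { intros x hx. apply nodup_In, p_In_lift_set in hx. exact hx. }
  assert (pO : forall x, In x (map lift_mu (lift_set Phi U)) -> In (p x) O).
  { intros x hx. apply in_map_iff in hx as [g [<- hg]]. rewrite p_lift_mu; auto. }
  split; [|split; [|split; [|split; [|split; [|split; [|split; [|split; [|split; [|split]]]]]]]]].
  - destruct U as [|u U']; [congruence|]. destruct Phi as [|f Phi']; [congruence|]. discriminate.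
  - now apply NoDup_lift_set.
  - apply NoDup_nodup.
  - apply NoDup_map_NoDup_ForallPairs; [|now apply NoDup_lift_set].
    intros x y hx hy e. apply (lift_mu_fibre_inj x y); [|exact e].
    apply (NoDup_map_inj_in mu U); auto; [apply (Permutation_NoDup (Permutation_sym perm)), nO|].
    rewrite <- !p_lift_mu; auto. now rewrite e.
  - exact (disjoint_proj p _ _ _ _ dUF pU pF).
  - exact (disjoint_proj p _ _ _ _ dUO pU pO).
  - exact (disjoint_proj p _ _ _ _ dFO pF pO).
  - assert (lenF : length (nodup classic_eq_dec (lift_set Y F)) <= length F * length Y).
    { rewrite <- length_lift_set. apply NoDup_incl_length; [apply NoDup_nodup|].
      intros x. apply nodup_In. }
    rewrite length_lift_set. nia.
  - apply Permutation_refl.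
  - intros x hx. apply lift_mu_dist; auto.
  - intros x l hx hc hl.
    destruct (lift_separation r U F O Phi Y x l) as [[v [hv hvF]]|hr]; auto.
    left. exists v. split; [auto|now apply nodup_In].
Qed.

End LiftMap.

End Lifting.

Theorem mainTheorem8 (H G K : Grp) (i : H -> G) (p : G -> K) :
  short_exact H G K i p ->
  amenable H ->
  finitely_generated G ->
  extraterrestrial_group K ->
  extraterrestrial_group G.
Proof.
  intros [hi [hp [i_inj [p_surj ker]]]] am fgG [SK [symK [genK extK]]].
  destruct (choice (fun k g => p g = k) p_surj) as [L pL].
  destruct (lift_generating_set G K p L SK hp pL fgG genK symK)
    as [S [symS [genS [S_lift S_proj]]]].
  exists S. split; [exact symS|split; [exact genS|]]. intros m.
  destruct (extK (2 * m)) as [k hk]. exists k. intros r.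
  destruct (hk r) as [U [F [O [mu wit]]]].
  destruct (amenable_weak_folner_r H (map (fibre_coord H G K i p L) (lift_region G K L S U r)) am)
    as [Phi [Y [Phi0 [nPhi [nY [cov lenY]]]]]].
  do 4 eexists.
  exact (lift_witness H G K i p hi hp i_inj ker L SK S pL S_lift S_proj k mu m r U F O Phi Y
    wit Phi0 nPhi nY cov lenY).
Qed.
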